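(* Let $m,n$ be positive integers with $4\mid mn$. If there exists a Hadamard matrix of order $mn$, then there exists an $(mn-1)$--$\mathrm{MOFR}(2m,2n;2)$.
   Context: A Hadamard matrix of order $N$ is an $N\times N$ matrix $H$ with entries in $\{1,-1\}$ satisfying $HH^T=NI_N$. A frequency rectangle of type $\mathrm{FR}(m,n;q)$ is an $m\times n$ array on a symbol set of size $q$ in which each symbol appears exactly $n/q$ times in each row and $m/q$ times in each column. Two frequency rectangles of the same type are orthogonal if upon superimposition each ordered pair of symbols appears equally often. A $k$--$\mathrm{MOFR}(m,n;q)$ is a set of $k$ pairwise orthogonal frequency rectangles of type $\mathrm{FR}(m,n;q)$. *)

From mathcomp Require Import all_boot all_order all_algebra.
Set Implicit Arguments. Unset Strict Implicit. Unset Printing Implicit Defensive.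
Import GRing.Theory Num.Theory.

Definition is_hadamard (N : nat) (H : 'M[int]_N) : Prop :=
  (forall i j, H i j = 1%R \/ H i j = (-1)%R) /\
  (H *m H^T = (N%:R)%:M)%R.

Definition is_FR (m n q : nat) (F : 'M['I_q]_(m, n)) : Prop :=
  forall s : 'I_q,
    (forall i : 'I_m, #|[set j : 'I_n | F i j == s]| * q = n) /\
    (forall j : 'I_n, #|[set i : 'I_m | F i j == s]| * q = m).

Definition FR_orthogonal (m n q : nat) (F G : 'M['I_q]_(m, n)) : Prop :=
  forall a b : 'I_q,
    #|[set p : 'I_m * 'I_n | (F p.1 p.2 == a) && (G p.1 p.2 == b)]| * (q * q)
      = m * n.

Definition MOFR (k m n q : nat) : Prop :=
  exists F : 'I_k -> 'M['I_q]_(m, n),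
    (forall t, is_FR (F t)) /\
    (forall t u, t != u -> FR_orthogonal (F t) (F u)).

(* Reshape row r of H into an m x n sign matrix A_r and take the Kronecker
   product K_r = [[1, -1], [-1, 1]] (x) A_r.  Every row and column of the
   2 x 2 factor sums to 0, hence so does every row and column of K_r: both
   signs occur equally often in each line, which makes K_r a frequency
   rectangle.  For sign arrays X, Y with N entries the number of positions
   where (X, Y) = (a, b) is (N + a sum X + b sum Y + a b sum XY) / 4.  Here
   sum K_r = 0, and the sum of the entrywise product of K_r and K_s factors as
   4 times the inner product of rows r and s of H, which vanishes for r <> s;
   so every pair of symbols occurs exactly N / 4 times. *)
From mathcomp Require Import all_boot all_order all_algebra.
From mathcomp Require Import mxtens ring.
Set Implicit Arguments. Unset Strict Implicit. Unset Printing Implicit Defensive.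
Import GRing.Theory Num.Theory.
Local Open Scope ring_scope.

Definition is_sign (R : pzRingType) (x : R) := x = 1 \/ x = -1.

Definition sign_mx (R : pzRingType) m n (A : 'M[R]_(m, n)) :=
  forall i j, is_sign (A i j).

Lemma is_signM (R : pzRingType) (x y : R) :
  is_sign x -> is_sign y -> is_sign (x * y).
Proof.
by move=> [|] -> [|] ->; rewrite ?mul1r ?mulN1r ?opprK; [left|right|right|left].
Qed.

Definition mxsum (R : nmodType) m n (A : 'M[R]_(m, n)) := \sum_i \sum_j A i j.

Section TensorSums.
Variable R : comPzRingType.

Lemma sum_row_tensmx m n p q (A : 'M[R]_(m, n)) (B : 'M[R]_(p, q)) i k :
  \sum_j (A *t B) (mxtens_index (i, k)) j = (\sum_j A i j) * (\sum_l B k l).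
Proof. by rewrite mulr_sum; apply: eq_bigr => j _; rewrite mxE mxtens_indexK. Qed.

Lemma sum_col_tensmx m n p q (A : 'M[R]_(m, n)) (B : 'M[R]_(p, q)) j l :
  \sum_i (A *t B) i (mxtens_index (j, l)) = (\sum_i A i j) * (\sum_k B k l).
Proof. by rewrite mulr_sum; apply: eq_bigr => i _; rewrite mxE mxtens_indexK. Qed.

Lemma mxsum_tensmx m n p q (A : 'M[R]_(m, n)) (B : 'M[R]_(p, q)) :
  mxsum (A *t B) = mxsum A * mxsum B.
Proof.
rewrite /mxsum mulr_sum; apply: eq_bigr => i _.
by case: (mxtens_indexP i) => x k; rewrite sum_row_tensmx mxtens_indexK.
Qed.

Lemma map2_mul_tensmx m n p q (A C : 'M[R]_(m, n)) (B D : 'M[R]_(p, q)) :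
  map2_mx *%R (A *t B) (C *t D) = map2_mx *%R A C *t map2_mx *%R B D.
Proof. by apply/matrixP => i j; rewrite !mxE mulrACA. Qed.

Lemma mxsum_map2_vec_mx m n (u v : 'rV[R]_(m * n)) :
  mxsum (map2_mx *%R (vec_mx u) (vec_mx v)) = (u *m v^T) 0 0.
Proof.
rewrite /mxsum pair_bigA /= mxE (reindex _ (curry_mxvec_bij _ _)) /=.
by apply: eq_bigr => -[i j] _; rewrite !mxE.
Qed.

End TensorSums.

Section SignCounting.
Variable R : numDomainType.

Lemma oppr1_eq1 : (-1 == 1 :> R) = false.
Proof. by rewrite eqNr oner_eq0. Qed.

Lemma sign_indicator (x a : R) : is_sign x -> is_sign a ->
  (x == a)%:R *+ 2 = 1 + a * x.
Proof.
have one_eqN1 : (1 == -1 :> R) = false by rewrite eq_sym oppr1_eq1.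
by move=> [|] -> [|] ->; rewrite ?eqxx ?oppr1_eq1 ?one_eqN1 /=; ring.
Qed.

Lemma card_natr_sum (T : finType) (P : pred T) :
  #|[set p | P p]|%:R = \sum_p (P p)%:R :> R.
Proof.
rewrite -sum1_card natr_sum big_mkcond /=.
by apply: eq_bigr => p _; rewrite inE; case: (P p).
Qed.

Lemma natr_mulrn_inj c k N : c%:R *+ k = N%:R :> R -> (c * k)%N = N.
Proof. by move=> E; apply/eqP; rewrite -(eqr_nat R) natrM mulr_natr E. Qed.

Variables (T : finType) (X Y : T -> R).
Hypotheses (X_sign : forall p, is_sign (X p)) (Y_sign : forall p, is_sign (Y p)).

Lemma card_sign_eq a : is_sign a ->
  #|[set p | X p == a]|%:R *+ 2 = #|T|%:R + a * \sum_p X p.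
Proof.
move=> a_sign; rewrite card_natr_sum -sumrMnl mulr_sumr -sumr_const -big_split.
by apply: eq_bigr => p _; rewrite (sign_indicator (X_sign p) a_sign).
Qed.

Lemma card_sign_eq2 a b : is_sign a -> is_sign b ->
  #|[set p | (X p == a) && (Y p == b)]|%:R *+ 4
    = #|T|%:R + a * \sum_p X p + b * \sum_p Y p + a * b * \sum_p X p * Y p.
Proof.
move=> a_sign b_sign.
rewrite card_natr_sum -sumrMnl !mulr_sumr -sumr_const -!big_split.
have indicator_and (u v : bool) :
    (u && v)%:R *+ 4 = (u%:R *+ 2) * (v%:R *+ 2) :> R.
  by case: u; case: v => /=; ring.
apply: eq_bigr => p _; rewrite indicator_and.
rewrite (sign_indicator (X_sign p) a_sign) (sign_indicator (Y_sign p) b_sign).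
by rewrite /=; ring.
Qed.

End SignCounting.

Section SignSymbols.
Variable R : numDomainType.

Definition sign_symbol (x : R) : 'I_2 := if x == 1 then ord0 else ord_max.

Definition symbol_sign (s : 'I_2) : R := (-1) ^+ s.

Lemma symbol_sign_is_sign s : is_sign (symbol_sign s).
Proof. by rewrite /symbol_sign -signr_odd; case: (odd s); [right | left]. Qed.

Lemma sign_symbol_eq x s :
  is_sign x -> (sign_symbol x == s) = (x == symbol_sign s).
Proof.
have one_eqN1 : (1 == -1 :> R) = false by rewrite eq_sym oppr1_eq1.
rewrite /sign_symbol /symbol_sign.
by case: s => -[|[|k]] // s_lt2 [|] ->;
  rewrite ?eqxx ?expr0 ?expr1 ?oppr1_eq1 ?one_eqN1.
Qed.

Variables m n : nat.

Lemma sign_mx_FR (G : 'M[R]_(m, n)) :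
  sign_mx G -> (forall i, \sum_j G i j = 0) -> (forall j, \sum_i G i j = 0) ->
  is_FR (map_mx sign_symbol G).
Proof.
move=> G_sign row0 col0 s; have s_sign := symbol_sign_is_sign s.
split=> [i|j]; apply: (@natr_mulrn_inj R).
  rewrite (eq_card (B := [set j | G i j == symbol_sign s])) => [|j].
    by rewrite (card_sign_eq (G_sign i) s_sign) row0 mulr0 addr0 card_ord.
  by rewrite !inE mxE sign_symbol_eq.
rewrite (eq_card (B := [set i | G i j == symbol_sign s])) => [|i].
  by rewrite (card_sign_eq (G_sign^~ j) s_sign) col0 mulr0 addr0 card_ord.
by rewrite !inE mxE sign_symbol_eq.
Qed.

Lemma mxsum_pairs (A : 'M[R]_(m, n)) : \sum_p A p.1 p.2 = mxsum A.
Proof. by rewrite /mxsum pair_bigA. Qed.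

Lemma sign_mx_orthogonal (G1 G2 : 'M[R]_(m, n)) :
  sign_mx G1 -> sign_mx G2 ->
  mxsum G1 = 0 -> mxsum G2 = 0 -> mxsum (map2_mx *%R G1 G2) = 0 ->
  FR_orthogonal (map_mx sign_symbol G1) (map_mx sign_symbol G2).
Proof.
move=> G1_sign G2_sign sum1 sum2 dot12 a b.
rewrite (eq_card (B := [set p | (G1 p.1 p.2 == symbol_sign a)
                              && (G2 p.1 p.2 == symbol_sign b)])) => [|p].
  2: by rewrite !inE !mxE !sign_symbol_eq.
apply: (@natr_mulrn_inj R).
rewrite (card_sign_eq2 (X := fun p => G1 p.1 p.2) (Y := fun p => G2 p.1 p.2)
  (fun p => G1_sign p.1 p.2) (fun p => G2_sign p.1 p.2)
  (symbol_sign_is_sign a) (symbol_sign_is_sign b)).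
have -> : \sum_p G1 p.1 p.2 * G2 p.1 p.2 = 0.
  by rewrite -[RHS]dot12 -mxsum_pairs; apply: eq_bigr => p _; rewrite mxE.
by rewrite !mxsum_pairs sum1 sum2 !mulr0 !addr0 card_prod !card_ord.
Qed.

End SignSymbols.

Arguments sign_symbol {R} x.

Section Doubling.
Variable R : comPzRingType.

Definition checkerboard : 'M[R]_2 := \matrix_(i, j) (-1) ^+ (i != j).

Lemma checkerboard_sign : sign_mx checkerboard.
Proof. by move=> i j; rewrite mxE; case: (i != j); [right | left]. Qed.

Lemma sum_row_checkerboard i : \sum_j checkerboard i j = 0.
Proof.
rewrite big_ord_recl big_ord1 !mxE.
by case: i => -[|[|k]] // i_lt2; rewrite /= ?expr0 ?expr1 ?subrr ?addNr.
Qed.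

Lemma sum_col_checkerboard j : \sum_i checkerboard i j = 0.
Proof.
rewrite big_ord_recl big_ord1 !mxE.
by case: j => -[|[|k]] // j_lt2; rewrite /= ?expr0 ?expr1 ?subrr ?addNr.
Qed.

Lemma mxsum_map2_checkerboard :
  mxsum (map2_mx *%R checkerboard checkerboard) = 4%:R.
Proof.
rewrite /mxsum (eq_bigr (fun=> 2%:R)) => [|i _].
  by rewrite sumr_const card_ord -mulrnA.
rewrite (eq_bigr (fun=> 1)) => [|j _]; first by rewrite sumr_const card_ord.
by rewrite !mxE -signr_addb addbb.
Qed.

Variables m n : nat.

Definition doubled (u : 'rV[R]_(m * n)) : 'M[R]_(2 * m, 2 * n) :=
  checkerboard *t vec_mx u.

Lemma doubled_sign u : sign_mx u -> sign_mx (doubled u).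
Proof.
move=> u_sign i j.
case: (mxtens_indexP i) => e x; case: (mxtens_indexP j) => f y.
rewrite tensmxE; apply: is_signM; first exact: checkerboard_sign.
by rewrite mxE.
Qed.

Lemma sum_row_doubled u i : \sum_j doubled u i j = 0.
Proof.
case: (mxtens_indexP i) => e x.
by rewrite sum_row_tensmx sum_row_checkerboard mul0r.
Qed.

Lemma sum_col_doubled u j : \sum_i doubled u i j = 0.
Proof.
case: (mxtens_indexP j) => f y.
by rewrite sum_col_tensmx sum_col_checkerboard mul0r.
Qed.

Lemma mxsum_doubled u : mxsum (doubled u) = 0.
Proof.
rewrite mxsum_tensmx /mxsum (eq_bigr (fun=> 0)) => [|i _].
  by rewrite big1 ?mul0r.
exact: sum_row_checkerboard.
Qed.

Lemma mxsum_map2_doubled u v :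
  mxsum (map2_mx *%R (doubled u) (doubled v)) = 4%:R * (u *m v^T) 0 0.
Proof.
by rewrite map2_mul_tensmx mxsum_tensmx mxsum_map2_checkerboard mxsum_map2_vec_mx.
Qed.

End Doubling.

Lemma hadamard_rows_orthogonal N (H : 'M[int]_N) r s :
  is_hadamard H -> r != s -> (row r H *m (row s H)^T) 0 0 = 0.
Proof.
move=> [_ HHt] rs; have := congr1 (fun A : 'M_N => A r s) HHt.
rewrite !mxE (negbTE rs) mulr0n => HHt_rs.
by rewrite -[RHS]HHt_rs; apply: eq_bigr => k _; rewrite !mxE.
Qed.

Local Close Scope ring_scope.

(* The paper normalizes H and discards its all-ones row. *)
Lemma hadamard_MOFR m n (H : 'M[int]_(m * n)) :
  is_hadamard H -> MOFR (m * n) (2 * m) (2 * n) 2.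
Proof.
move=> H_had; have [H_sign _] := H_had.
have row_sign r : sign_mx (row r H) by move=> i k; rewrite mxE; apply: H_sign.
exists (fun r => map_mx sign_symbol (doubled (row r H))); split=> [r | r s rs].
  apply: sign_mx_FR; [exact: doubled_sign | exact: sum_row_doubled |
                      exact: sum_col_doubled].
apply: sign_mx_orthogonal; [exact: doubled_sign | exact: doubled_sign |
                            exact: mxsum_doubled | exact: mxsum_doubled | ].
by rewrite mxsum_map2_doubled hadamard_rows_orthogonal ?mulr0.
Qed.

Lemma MOFR_le k k' m n q : k <= k' -> MOFR k' m n q -> MOFR k m n q.
Proof.
move=> le_kk' [F [F_FR F_orth]]; exists (fun t => F (widen_ord le_kk' t)).
split=> // t u tu; apply: F_orth; apply: contra tu => /eqP/(congr1 val) tu_eq.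
exact/eqP/val_inj.
Qed.

Theorem mainTheorem2 (m n : nat) :
  0 < m -> 0 < n -> 4 %| m * n ->
  (exists H : 'M[int]_(m * n), is_hadamard H) ->
  MOFR (m * n - 1) (2 * m) (2 * n) 2.
Proof.
move=> _ _ _ [H H_had].
exact: MOFR_le (leq_subr 1 _) (hadamard_MOFR H_had).
Qed.
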